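(* Let $X\subseteq Q^*(\mathcal{G})$ be a hereditary class. Then the clique-width of graphs in $X$ is bounded by a constant if and only if the clique-width of the $Q$-graphs belonging to $X$ is bounded by a constant.
   Context: All graphs are finite, simple and undirected; $\mathcal{G}$ denotes the class of all such graphs. A class is hereditary if closed under taking induced subgraphs. For a graph $G=(V,E)$, $Q(G)$ is the graph with vertex set $V\cup E$ in which $V$ is a clique, $E$ is a clique, and $v\in V$ is adjacent to $e\in E$ iff $v$ is an endpoint of $e$ in $G$. A $Q$-graph is a graph isomorphic to $Q(G)$ for some graph $G$. For a class $Y$, $Q(Y)=\{Q(G):G\in Y\}$ and $Q^*(Y)$ is the set of all induced subgraphs of graphs in $Q(Y)$. *)

From HB Require Import structures.
From mathcomp Require Import all_boot.
Set Implicit Arguments. Unset Strict Implicit. Unset Printing Implicit Defensive.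

Record sgraph := SGraph {
  vert : finType;
  adj : rel vert;
  adj_sym : symmetric adj;
  adj_irr : irreflexive adj }.

Definition induced_sub (H G : sgraph) : Prop :=
  exists f : vert H -> vert G, injective f /\
    forall x y, adj x y = adj (f x) (f y).

Definition isomorphic (H G : sgraph) : Prop :=
  exists f : vert H -> vert G, bijective f /\
    forall x y, adj x y = adj (f x) (f y).

Definition hereditary (X : sgraph -> Prop) : Prop :=
  forall G H, X G -> induced_sub H G -> X H.

Section QGraph.
Variable G : sgraph.
Let V := vert G.

Definition is_edge (A : {set V}) : bool :=
  [exists x, exists y, adj x y && (A == [set x; y])].

Definition Qvert : finType := (V + {A : {set V} | is_edge A})%type.

Definition Qadj : rel Qvert := fun a b =>
  match a, b with
  | inl u, inl v => u != v
  | inr e, inr f => e != f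
  | inl v, inr e => v \in val e
  | inr e, inl v => v \in val e
  end.

Lemma Qadj_sym : symmetric Qadj.
Proof. by case=> [u|e] [v|f] //=; rewrite eq_sym. Qed.

Lemma Qadj_irr : irreflexive Qadj.
Proof. by case=> [u|e] /=; rewrite eqxx. Qed.

Definition Q : sgraph := SGraph Qadj_sym Qadj_irr.
End QGraph.

Definition is_Qgraph (H : sgraph) : Prop := exists G : sgraph, isomorphic H (Q G).

(* Membership in Q^*(all graphs): induced subgraph of some Q(G). *)
Definition in_Qstar (H : sgraph) : Prop := exists G : sgraph, induced_sub H (Q G).

Definition sum_rel (V1 V2 : finType) (a1 : rel V1) (a2 : rel V2) : rel (V1 + V2)%type :=
  fun x y => match x, y with
  | inl u, inl v => a1 u v
  | inr u, inr v => a2 u v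
  | _, _ => false
  end.

Definition sum_lab (V1 V2 : finType) (l1 : V1 -> nat) (l2 : V2 -> nat) (x : (V1 + V2)%type) : nat :=
  match x with inl u => l1 u | inr v => l2 v end.

(* cwl k V a l : the labelled graph (V, a, l) is (isomorphic to) the value of
   a k-expression, i.e. it is built with labels in {0,..,k-1} from
   single labelled vertices by disjoint union, joins eta_{i,j} (i <> j)
   and relabellings rho_{i->j}.  The empty graph is allowed (clique-width 0). *)
Inductive cwl (k : nat) : forall V : finType, rel V -> (V -> nat) -> Prop :=
| cw_empty (V : finType) (a : rel V) (l : V -> nat) :
    #|V| = 0 -> cwl k a l
| cw_vertex (V : finType) (a : rel V) (l : V -> nat) :
    #|V| = 1 -> (forall x y, a x y = false) -> (forall x, l x < k) -> cwl k a l
| cw_union (V1 V2 : finType) (a1 : rel V1) (l1 : V1 -> nat) (a2 : rel V2) (l2 : V2 -> nat) :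
    cwl k a1 l1 -> cwl k a2 l2 -> cwl k (sum_rel a1 a2) (sum_lab l1 l2)
| cw_join (V : finType) (a : rel V) (l : V -> nat) (i j : nat) :
    i != j -> cwl k a l ->
    cwl k (fun x y => [|| a x y, (l x == i) && (l y == j) | (l x == j) && (l y == i)]) l
| cw_relab (V : finType) (a : rel V) (l : V -> nat) (i j : nat) :
    j < k -> cwl k a l -> cwl k a (fun x => if l x == i then j else l x)
| cw_iso (V W : finType) (a : rel V) (l : V -> nat) (b : rel W) (m : W -> nat) (f : V -> W) :
    bijective f -> (forall x y, b (f x) (f y) = a x y) -> (forall x, m (f x) = l x) ->
    cwl k a l -> cwl k b m.

Definition cw_le (k : nat) (G : sgraph) : Prop :=
  exists l : vert G -> nat, cwl k (@adj G) l.

Definition cw_bounded (P : sgraph -> Prop) : Prop :=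
  exists c : nat, forall G, P G -> cw_le c G.

(* Let H in X embed as an induced subgraph of Q(G0).  The vertices of H sent
   to V(G0), together with the vertices sent to edges that see exactly two of
   them, induce a copy of Q(G) for some graph G; by heredity this Q-graph lies
   in X, so it has clique-width at most c.  Every other vertex of H is sent to
   an edge, hence the remaining vertices form a clique that is complete to the
   edge part of the copy and sees at most one vertex of its vertex part.
   With the labels of a c-expression of the copy split into a vertex half and
   an edge half, the remaining vertices can be inserted using two more labels,
   by induction on the expression; so H has clique-width at most 2c + 2. *)

From mathcomp Require Import all_boot zify.
Set Implicit Arguments. Unset Strict Implicit. Unset Printing Implicit Defensive.

Lemma inj_surj_bij (T T' : finType) (f : T -> T') :
  injective f -> (forall y, exists x, f x = y) -> bijective f.
Proof.
move=> f_inj f_surj; apply: inj_card_bij => //.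
rewrite -(card_codom f_inj); apply: subset_leq_card; apply/subsetP=> y _.
by have [x <-] := f_surj y; exact: codom_f.
Qed.

Section CliqueWidth.
Variable k : nat.

Lemma eq_cwl (V : finType) (a b : rel V) (l m : V -> nat) :
  (forall x y, b x y = a x y) -> (forall x, m x = l x) -> cwl k a l -> cwl k b m.
Proof. by move=> eq_ab eq_lm; apply: (cw_iso (f := id)) => //; exists id. Qed.

Lemma cwl_transport (V W : finType) (a : rel V) (b : rel W) (l : V -> nat) (f : V -> W) :
  bijective f -> (forall x y, b (f x) (f y) = a x y) -> cwl k a l ->
  exists m, cwl k b m.
Proof.
move=> f_bij f_ab C; have [g fK gK] := f_bij.
by exists (l \o g); apply: (cw_iso f_bij f_ab _ C) => x /=; rewrite fK.
Qed.

Lemma cwl_lab_lt (V : finType) (a : rel V) l : cwl k a l -> forall x, l x < k.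
Proof.
elim=> {V a l} //.
- by move=> V a l V0 x; move: (max_card (pred1 x)); rewrite V0 card1.
- by move=> V1 V2 a1 l1 a2 l2 _ lt1 _ lt2 [x|x] /=.
- by move=> V a l i j jk _ lt x; case: ifP.
- by move=> V W a l b m f [g _ gK] _ ml _ lt x; rewrite -(gK x) ml.
Qed.

End CliqueWidth.

Lemma cwl_widen k k' (V : finType) (a : rel V) l : k <= k' -> cwl k a l -> cwl k' a l.
Proof.
move=> kk'; elim=> {V a l}.
- by move=> *; apply: cw_empty.
- by move=> V a l V1 a0 lk; apply: cw_vertex => // x; exact: leq_trans (lk x) kk'.
- by move=> *; apply: cw_union.
- by move=> *; apply: cw_join.
- by move=> V a l i j jk _ C; apply: cw_relab C; exact: leq_trans jk kk'.
- by move=> V W a l b m f *; apply: (@cw_iso _ _ _ a l b m f).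
Qed.

(* The new vertex is created with the spare label [P'], joined to the labels
   [P] (and [q]), then relabelled to [P]. *)
Lemma cwl_add_vertex k (V : finType) (a : rel V) (l : V -> nat) (P P' q : nat) (att : bool) :
  cwl k a l -> P < k -> P' < k -> P != P' -> q != P' -> (forall x, l x != P') ->
  cwl k (fun x y : V + unit => match x, y with
     | inl u, inl v => a u v
     | inl u, inr _ | inr _, inl u => (l u == P) || att && (l u == q)
     | inr _, inr _ => false end) (sum_lab l (fun _ => P)).
Proof.
move=> C Pk P'k /negbTE PP' /negbTE qP' l_P'.
have lP' u : (l u == P') = false by exact/negbTE.
have P'P : (P' == P) = false by rewrite eq_sym PP'.
have P'q : (P' == q) = false by rewrite eq_sym qP'.
have C1 : cwl k (fun _ _ : unit => false) (fun _ => P').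
  by apply: cw_vertex => //; rewrite card_unit.
have C2 := cw_join (negbT PP') (cw_union C C1).
case: att.
- apply: eq_cwl (cw_relab P' Pk (cw_join (negbT qP') C2)).
  + by move=> [u|[]] [v|[]] /=; rewrite ?eqxx ?PP' ?P'P ?qP' ?P'q ?lP' ?andbF ?andbT ?orbF.
  + by move=> [u|[]] /=; rewrite ?eqxx ?lP'.
- apply: eq_cwl (cw_relab P' Pk C2).
  + by move=> [u|[]] [v|[]] /=; rewrite ?eqxx ?PP' ?P'P ?lP' ?andbF ?andbT ?orbF.
  + by move=> [u|[]] /=; rewrite ?eqxx ?lP'.
Qed.

Definition clique_ext (V W : finType) (a : rel V) (r : W -> V -> bool) : rel (V + W) :=
  fun x y => match x, y with
  | inl u, inl v => a u v
  | inl u, inr w | inr w, inl u => r w u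
  | inr w, inr w' => w != w' end.

Definition clique_lab (V W : finType) (l : V -> nat) (P : nat) (x : V + W) : nat :=
  if x is inl u then l u else P.

Section CliqueExtension.
Variable k : nat.

Lemma cwl_clique_ext_step (V W : finType) (a : rel V) (l : V -> nat) (r : W -> V -> bool)
    (w0 : W) (att : bool) (q : nat) :
  (forall u, l u < k) -> q != k.+1 -> (forall u, r w0 u = att && (l u == q)) ->
  cwl k.+2 (clique_ext a (fun w : {w | w != w0} => r (val w))) (clique_lab l k) ->
  cwl k.+2 (clique_ext a r) (clique_lab l k).
Proof.
move=> lk qk r_w0 C.
have lk1 (x : V + {w | w != w0}) : clique_lab l k x != k.+1.
  case: x => [u|w] /=; last by rewrite neq_ltn ltnSn.
  by rewrite neq_ltn ltnS ltnW.
have C1 := cwl_add_vertex att C (ltnW (ltnSn k.+1)) (ltnSn k.+1)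
  (negbT (ltn_eqF (ltnSn k))) qk lk1.
pose F (x : (V + {w | w != w0}) + unit) : V + W :=
  match x with inl (inl u) => inl u | inl (inr w) => inr (val w) | inr _ => inr w0 end.
apply: (cw_iso (f := F) _ _ _ C1).
- apply: inj_surj_bij.
  + move=> [[u|w]|[]] [[u'|w']|[]] //= [].
    * by move=> ->.
    * by move/val_inj=> ->.
    * by move=> e; move: (valP w); rewrite /= e eqxx.
    * by move=> e; move: (valP w'); rewrite /= -e eqxx.
  + move=> [u|w]; first by exists (inl (inl u)).
    have [->|ww0] := eqVneq w w0; first by exists (inr tt).
    by exists (inl (inr (exist _ w ww0))).
- move=> [[u|w]|[]] [[u'|w']|[]] //=.
  + by rewrite r_w0 (ltn_eqF (lk u)).
  + by rewrite (valP w) eqxx.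
  + by rewrite r_w0 (ltn_eqF (lk u')).
  + by rewrite eq_sym (valP w') eqxx.
  + by rewrite eqxx.
- by move=> [[u|w]|[]].
Qed.

(* With at most one vertex in [V], attaching by label is exact. *)
Lemma cwl_clique_ext_le1 (V W : finType) (a : rel V) l (r : W -> V -> bool) :
  cwl k a l -> (forall x y : V, x = y) -> cwl k.+2 (clique_ext a r) (clique_lab l k).
Proof.
move=> C V_le1; have lk := cwl_lab_lt C.
move nW: #|W| => n; elim: n W r nW => [|n IH] W r nW.
  apply: (cw_iso (f := inl) _ _ _ (cwl_widen (leqW (leqnSn k)) C)) => //.
  apply: inj_surj_bij => [x y []|[u|w]]; first by [].
    by exists u.
  by move: (max_card (pred1 w)); rewrite nW card1.
have [w0 _] : exists w0, w0 \in W by apply/card_gt0P; rewrite nW.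
have nW' : #|{: {w | w != w0}}| = n.
  by rewrite card_sig -[n]/(n.+1.-1) -nW -(cardC1 w0); apply: eq_card.
have C' := IH _ (fun w : {w | w != w0} => r (val w)) nW'.
case: (pickP (fun _ : V => true)) => [v0 _|V0].
- apply: (@cwl_clique_ext_step _ _ _ _ _ w0 (r w0 v0) (l v0)) => //.
  + by rewrite neq_ltn ltnS ltnW ?lk.
  + by move=> u; rewrite (V_le1 u v0) eqxx andbT.
- apply: (@cwl_clique_ext_step _ _ _ _ _ w0 false k) => //.
  + by rewrite neq_ltn ltnSn.
  + by move=> u; move: (V0 u).
Qed.

Definition clique_extendable (V : finType) (a : rel V) (l : V -> nat) : Prop :=
  forall (W : finType) (r : W -> V -> bool), (forall w u v, r w u -> r w v -> u = v) ->
  cwl k.+2 (clique_ext a r) (clique_lab l k).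

(* The vertices of [W] attached to [V2] are built with the temporary label
   [k.+1], then joined to the others and relabelled to [k]. *)
Lemma cwl_clique_ext_union (V1 V2 : finType) (a1 : rel V1) l1 (a2 : rel V2) l2 :
  cwl k a1 l1 -> cwl k a2 l2 ->
  clique_extendable a1 l1 -> clique_extendable a2 l2 ->
  clique_extendable (sum_rel a1 a2) (sum_lab l1 l2).
Proof.
move=> C1 C2 IH1 IH2 W r r_uniq.
have lk1 := cwl_lab_lt C1; have lk2 := cwl_lab_lt C2.
pose E w := [exists v2, r w (inr v2)].
have C1' := IH1 {w | ~~ E w} (fun w v => r (val w) (inl v))
  (fun w u v ru rv => ltac:(by case: (r_uniq _ _ _ ru rv))).
have C2' := IH2 {w | E w} (fun w v => r (val w) (inr v))
  (fun w u v ru rv => ltac:(by case: (r_uniq _ _ _ ru rv))).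
have C := cw_relab k.+1 (leqW (ltnSn k))
  (cw_join (negbT (ltn_eqF (ltnSn k)))
    (cw_union C1' (cw_relab k (ltnSn k.+1) C2'))).
have rE (w : {w | E w}) u : r (val w) (inl u) = false.
  case: w => [w /= /existsP [v2 rv2]]; apply/negbTE/negP=> ru.
  by have := r_uniq _ _ _ rv2 ru.
have rNE (w : {w | ~~ E w}) v : r (val w) (inr v) = false.
  case: w => [w /= Ew]; apply/negbTE/negP=> rv.
  by move: Ew; rewrite negb_exists => /forallP /(_ v); rewrite rv.
have lk1' u : (l1 u == k) = false by rewrite ltn_eqF.
have lk2' u : (l2 u == k) = false by rewrite ltn_eqF.
have lk1S u : (l1 u == k.+1) = false by rewrite ltn_eqF // ltnS ltnW.
have lk2S u : (l2 u == k.+1) = false by rewrite ltn_eqF // ltnS ltnW.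
have kkS : (k == k.+1) = false by rewrite ltn_eqF.
have kSk : (k.+1 == k) = false by rewrite eq_sym kkS.
pose F (x : (V1 + {w | ~~ E w}) + (V2 + {w | E w})) : (V1 + V2) + W :=
  match x with
  | inl (inl u) => inl (inl u) | inl (inr w) => inr (val w)
  | inr (inl v) => inl (inr v) | inr (inr w) => inr (val w) end.
apply: (cw_iso (f := F) _ _ _ C).
- apply: inj_surj_bij.
  + move=> [[u|w]|[u|w]] [[u'|w']|[u'|w']] //= [] e; (try by rewrite e);
      (try by rewrite (val_inj e)); (try by move: (valP w); rewrite /= e (valP w'));
      by move: (valP w'); rewrite /= -e (valP w).
  + move=> [[u|v]|w]; first by exists (inl (inl u)).
      by exists (inr (inl v)).
    have [Ew|NEw] := boolP (E w).
      by exists (inr (inr (exist _ w Ew))).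
    by exists (inl (inr (exist _ w NEw))).
- move=> [[u|w]|[u|w]] [[u'|w']|[u'|w']] /=;
    rewrite ?lk1' ?lk2' ?lk1S ?lk2S ?kkS ?kSk ?eqxx ?rE ?rNE ?andbF ?orbF ?andbT //=.
  + by apply/eqP=> e; move: (valP w); rewrite /= e (valP w').
  + by apply/eqP=> e; move: (valP w'); rewrite /= -e (valP w).
  + by rewrite kSk !orbF.
- by move=> [[u|w]|[u|w]] /=; rewrite ?lk1' ?lk2' ?lk1S ?lk2S ?kkS ?kSk ?eqxx.
Qed.

Lemma cwl_clique_ext (V : finType) (a : rel V) l : cwl k a l -> clique_extendable a l.
Proof.
elim=> {V a l}.
- move=> V a l V0 W r _; apply: cwl_clique_ext_le1; first exact: cw_empty.
  by move=> x; move: (max_card (pred1 x)); rewrite V0 card1.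
- move=> V a l V1 a0 lk W r _; apply: cwl_clique_ext_le1; first exact: cw_vertex.
  by move=> x y; have /fintype_le1P := eq_leq V1; move=> /(_ y) ->.
- by move=> V1 V2 a1 l1 a2 l2 C1 IH1 C2 IH2; apply: cwl_clique_ext_union.
- move=> V a l i j ij C IH W r r_uniq; have lk := cwl_lab_lt C.
  have lk' u : (l u == k) = false by rewrite ltn_eqF.
  have [/andP [/negbTE ik /negbTE jk] | ijk] := boolP ((i != k) && (j != k)).
    apply: eq_cwl (cw_join ij (IH W r r_uniq)) => // [[u|w] [v|w']] /=;
    by rewrite ?(eq_sym k) ?ik ?jk ?andbF ?orbF.
  apply: eq_cwl (IH W r r_uniq) => //.
  move: ijk; rewrite negb_and !negbK => /orP [] /eqP -> [u|w] [v|w'] //=;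
    by rewrite ?lk' ?andbF ?orbF.
- move=> V a l i j jk C IH W r r_uniq; have lk := cwl_lab_lt C.
  have [->|/negbTE ik] := eqVneq i k.
    by apply: eq_cwl (IH W r r_uniq) => // [[u|w]] //=; rewrite ltn_eqF.
  apply: eq_cwl (cw_relab i (leq_trans jk (leqW (leqnSn k))) (IH W r r_uniq)) => //.
  by move=> [u|w] //=; rewrite eq_sym ik.
- move=> V V' a l b m f f_bij f_ab ml C IH W r r_uniq.
  have f_inj := bij_inj f_bij; have [g _ gK] := f_bij.
  have C' := IH W (fun w v => r w (f v)) (fun w u v ru rv => f_inj _ _ (r_uniq _ _ _ ru rv)).
  pose F (x : V + W) : V' + W := match x with inl u => inl (f u) | inr w => inr w end.
  apply: (cw_iso (f := F) _ _ _ C').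
  + apply: inj_surj_bij.
      by move=> [u|w] [u'|w'] //= [] => [/f_inj|] ->.
    move=> [y|w]; last by exists (inr w).
    by exists (inl (g y)); rewrite /= gK.
  + by move=> [u|w] [u'|w'] /=; rewrite ?f_ab.
  + by move=> [u|w] /=.
Qed.
End CliqueExtension.

Section SplitLabels.
Variables (k : nat) (s : bool).

Lemma shift_lab_eq (n i : nat) : n < k -> i < k ->
  ((if s then n + k else n) == i) = ~~ s && (n == i).
Proof.
by case: s => //= nk ik; apply/negbTE; rewrite neq_ltn (leq_trans ik) ?orbT ?leq_addl.
Qed.

Lemma shift_lab_eq_shift (n i : nat) : n < k -> i < k ->
  ((if s then n + k else n) == i + k) = s && (n == i).
Proof.
case: s => /= nk ik; first by rewrite eqn_add2r.
by apply/negbTE; rewrite neq_ltn (leq_trans nk) ?leq_addl.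
Qed.
End SplitLabels.

Lemma cwl_split_labels k (V : finType) (a : rel V) l (s : pred V) :
  cwl k a l -> cwl (k + k) a (fun x => if s x then l x + k else l x).
Proof.
move=> C; elim: C s => {V a l}.
- by move=> V a l V0 s; apply: cw_empty.
- move=> V a l V1 a0 lk s; apply: cw_vertex => // x.
  by case: (s x); rewrite ?ltn_add2r ?(leq_trans (lk x)) ?leq_addr.
- move=> V1 V2 a1 l1 a2 l2 _ IH1 _ IH2 s.
  by apply: eq_cwl (cw_union (IH1 (s \o inl)) (IH2 (s \o inr))) => // [[u|v]].
- move=> V a l i j ij C IH s; have lk := cwl_lab_lt C.
  have [/andP [ik jk] | ijk] := boolP ((i < k) && (j < k)).
    have ij1 : i + k != j by rewrite neq_ltn (leq_trans jk (leq_addl _ _)) orbT.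
    have ij2 : i != j + k by rewrite neq_ltn (leq_trans ik (leq_addl _ _)).
    have ij3 : i + k != j + k by rewrite eqn_add2r.
    apply: eq_cwl (cw_join ij3 (cw_join ij2 (cw_join ij1 (cw_join ij (IH s))))) => // x y.
    rewrite !shift_lab_eq_shift ?lk // !shift_lab_eq ?lk //.
    by case: (s x); case: (s y); case: (l x == i); case: (l x == j); case: (l y == i);
       case: (l y == j); case: (a x y).
  apply: eq_cwl (IH s) => // x y.
  move: ijk; rewrite negb_and -!leqNgt => /orP [] ijk;
    by rewrite ?(ltn_eqF (leq_trans (lk _) ijk)) ?andbF ?orbF.
- move=> V a l i j jk C IH s; have lk := cwl_lab_lt C.
  have [ik|ki] := ltnP i k; last first.
    by apply: eq_cwl (IH s) => // x; rewrite (ltn_eqF (leq_trans (lk _) ki)).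
  have jk2 : j + k < k + k by rewrite ltn_add2r.
  apply: eq_cwl (cw_relab (i + k) jk2 (cw_relab i (leq_trans jk (leq_addr _ _)) (IH s))) => // x.
  case: (s x) => /=.
    by rewrite (shift_lab_eq true) ?lk // eqn_add2r; case: (l x == i).
  by case: (l x == i); rewrite ltn_eqF // (leq_trans _ (leq_addl _ _)).
- move=> V W a l b m f f_bij f_ab ml C IH s.
  by apply: (cw_iso f_bij f_ab _ (IH (s \o f))) => x /=; rewrite ml.
Qed.

Lemma cwl_join_range k (V : finType) (a : rel V) (l : V -> nat) (P c n : nat) :
  cwl k a l -> ~~ (c <= P < c + n) ->
  cwl k (fun x y => [|| a x y, (l x == P) && (c <= l y < c + n)
                           | (l y == P) && (c <= l x < c + n)]) l.
Proof.
have rangeS m n' : (c <= m < c + n'.+1) = (c <= m < c + n') || (m == c + n') by lia.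
move=> C; elim: n => [|n IH] Pn.
  by apply: eq_cwl C => // x y; rewrite addn0 !ltnNge !andbN !andbF !orbF.
have Pn' : ~~ (c <= P < c + n) by apply: contra Pn; rewrite rangeS => ->.
have Pcn : P != c + n by apply: contra Pn; rewrite rangeS => ->; rewrite orbT.
apply: eq_cwl (cw_join Pcn (IH Pn')) => // x y; rewrite !rangeS.
by case: (a x y); case: (l x == P); case: (l y == P); case: (c <= l x < c + n);
   case: (c <= l y < c + n); case: (l x == c + n); case: (l y == c + n).
Qed.

Lemma cwl_attach_clique c (V W : finType) (a : rel V) l (s : pred V) (r : W -> V -> bool) :
  cwl c a l -> (forall w u v, r w u -> r w v -> u = v) ->
  cwl (c + c).+2 (clique_ext a (fun w u => s u || r w u))
    (clique_lab (fun u => if s u then l u + c else l u) (c + c)).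
Proof.
move=> C r_uniq; have lc := cwl_lab_lt C.
have C' := cwl_clique_ext (cwl_split_labels s C) r_uniq.
have cc_out : ~~ (c <= c + c < c + c) by rewrite ltnn andbF.
have {}C' := cwl_join_range C' cc_out.
apply: eq_cwl C' => // x y.
set L := clique_lab _ (c + c).
have lab_neq u : (L (inl u) == c + c) = false.
  by apply: ltn_eqF => /=; case: (s u); rewrite ?ltn_add2r ?(leq_trans (lc u)) ?leq_addr.
have lab_range u : (c <= L (inl u) < c + c) = s u.
  by rewrite /=; case: (s u); rewrite ?leq_addl ?ltn_add2r ?lc // leqNgt lc.
case: x y => [u|w] [v|w']; rewrite ?lab_neq ?lab_range ?andbF ?orbF //=.
all: by rewrite eqxx ?ltnn ?andbF ?orbF // orbC.
Qed.

Lemma card_edge (G : sgraph) (A : {set vert G}) : is_edge A -> #|A| = 2.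
Proof.
case/existsP=> x /existsP [y /andP [xy /eqP ->]]; rewrite cards2.
by case: eqVneq xy => // ->; rewrite adj_irr.
Qed.

Section Reconstruction.
Variables (H G0 : sgraph) (phi : vert H -> Qvert G0).
Hypothesis phi_inj : injective phi.
Hypothesis phi_adj : forall x y, adj x y = Qadj (phi x) (phi y).

Definition vside (z : vert H) : bool := if phi z is inl _ then true else false.

Definition vnbhd (z : vert H) : {set {x | vside x}} := [set u | adj z (val u)].

(* [z] plays the role of an edge of the base graph. *)
Definition full_edge (z : vert H) : bool := ~~ vside z && (#|vnbhd z| == 2).

Definition base_adj : rel {x | vside x} :=
  fun u v => (u != v) && [exists z, full_edge z && (vnbhd z == [set u; v])].

Lemma base_adj_sym : symmetric base_adj.
Proof. by move=> u v; rewrite /base_adj eq_sym setUC. Qed.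

Lemma base_adj_irr : irreflexive base_adj.
Proof. by move=> u; rewrite /base_adj eqxx. Qed.

Definition base_graph : sgraph := SGraph base_adj_sym base_adj_irr.

Lemma adj_same_side x y : vside x = vside y -> adj x y = (x != y).
Proof.
by rewrite phi_adj -(inj_eq phi_inj) /vside; case: (phi x) (phi y) => [?|?] [?|?].
Qed.

Lemma vnbhd_img z e : phi z = inr e ->
  [set phi (val u) | u in vnbhd z] \subset [set inl t | t in val e].
Proof.
move=> phi_z; apply/subsetP=> _ /imsetP [u + ->]; rewrite inE phi_adj phi_z.
by case: u => x /=; rewrite /vside; case: (phi x) => // t _ te; rewrite imset_f.
Qed.

Lemma phi_val_inj : injective (fun u : {x | vside x} => phi (val u)).
Proof. by move=> u v /phi_inj /val_inj. Qed.

Lemma card_vnbhd z e : phi z = inr e -> #|vnbhd z| <= 2.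
Proof.
move=> phi_z; have := subset_leq_card (vnbhd_img phi_z).
by rewrite !card_imset ?(card_edge (valP e)) //; [exact: inl_inj | exact: phi_val_inj].
Qed.

Lemma full_edge_img z e : phi z = inr e -> full_edge z ->
  [set phi (val u) | u in vnbhd z] = [set inl t | t in val e].
Proof.
move=> phi_z /andP [_ /eqP card2]; apply/eqP; rewrite eqEcard vnbhd_img //.
rewrite !card_imset ?card2 ?(card_edge (valP e)) //; [exact: phi_val_inj | exact: inl_inj].
Qed.

Lemma eside_img z : ~~ vside z -> exists e, phi z = inr e.
Proof. by rewrite /vside; case: (phi z) => // e _; exists e. Qed.

Lemma full_edge_inj z z' : full_edge z -> full_edge z' -> vnbhd z = vnbhd z' -> z = z'.
Proof.
move=> fz fz' nzz'; have /andP [/eside_img [e phi_z] _] := fz.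
have /andP [/eside_img [e' phi_z'] _] := fz'.
have := full_edge_img phi_z fz; rewrite nzz' (full_edge_img phi_z' fz').
by move/(imset_inj inl_inj)/val_inj => ee'; apply: phi_inj; rewrite phi_z phi_z' ee'.
Qed.

Definition partial_edge (z : vert H) : bool := ~~ vside z && ~~ full_edge z.

Lemma partial_edge_vnbhd z u v : partial_edge z -> u \in vnbhd z -> v \in vnbhd z -> u = v.
Proof.
case/andP=> nvz; rewrite /full_edge nvz /= => not2.
have [e phi_z] := eside_img nvz; have := card_vnbhd phi_z.
rewrite leq_eqVlt ltnS (negbTE not2) /= => /card_le1_eqP uniq_nz nz_u nz_v.
exact: uniq_nz.
Qed.

Lemma full_edge_is_edge z : full_edge z -> is_edge (G := base_graph) (vnbhd z).
Proof.
move=> fz; have /andP [_ /cards2P [u [v [uv nz]]]] := fz.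
apply/existsP; exists u; apply/existsP; exists v; rewrite nz eqxx andbT /= /base_adj uv.
by apply/existsP; exists z; rewrite fz nz eqxx.
Qed.

Lemma base_edge_witness (e : {A | is_edge (G := base_graph) A}) :
  exists z, full_edge z && (vnbhd z == val e).
Proof.
case: e => A /= /existsP [u /existsP [v /andP [/andP [_ /existsP [z]]]]].
by move=> /andP [fz /eqP nz] /eqP ->; exists z; rewrite fz nz eqxx.
Qed.

Definition embedQ (q : Qvert base_graph) : vert H :=
  match q with inl u => val u | inr e => xchoose (base_edge_witness e) end.

Lemma embedQ_edge e : full_edge (embedQ (inr e)) && (vnbhd (embedQ (inr e)) == val e).
Proof. exact: (xchooseP (base_edge_witness e)). Qed.

Lemma embedQ_partial q : partial_edge (embedQ q) = false.
Proof.
case: q => [u|e]; first by rewrite /partial_edge (valP u).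
by have /andP [fe _] := embedQ_edge e; rewrite /partial_edge fe andbF.
Qed.

Lemma embedQ_eside e : vside (embedQ (inr e)) = false.
Proof. by have /andP [/andP [/negbTE -> _] _] := embedQ_edge e. Qed.

Lemma embedQ_inj : injective embedQ.
Proof.
move=> [u|e] [u'|e'] /=.
- by move/val_inj->.
- by move=> uu'; move: (valP u); rewrite /= uu' embedQ_eside.
- by move=> uu'; move: (valP u'); rewrite /= -uu' embedQ_eside.
- move=> ee'; congr inr; apply: val_inj.
  have /andP [_ /eqP <-] := embedQ_edge e.
  by have /andP [_ /eqP <-] := embedQ_edge e'; rewrite /= ee'.
Qed.

Lemma embedQ_adj q q' : adj (embedQ q) (embedQ q') = Qadj q q'.
Proof.
have adj_edge e u : adj (embedQ (inr e)) (val u) = (u \in val e).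
  by have /andP [_ /eqP <-] := embedQ_edge e; rewrite inE.
case: q q' => [u|e] [u'|e'].
- by rewrite /= adj_same_side ?(valP u) ?(valP u').
- by rewrite adj_sym adj_edge.
- by rewrite adj_edge.
- by rewrite adj_same_side ?embedQ_eside // (inj_eq embedQ_inj).
Qed.

Lemma Q_base_induced : induced_sub (Q base_graph) H.
Proof. by exists embedQ; split; [exact: embedQ_inj | move=> q q'; rewrite embedQ_adj]. Qed.

Definition decomp (x : Qvert base_graph + {z | partial_edge z}) : vert H :=
  match x with inl q => embedQ q | inr w => val w end.

Lemma decomp_bij : bijective decomp.
Proof.
apply: inj_surj_bij.
  move=> [q|w] [q'|w'] /=.
  - by move/embedQ_inj->.
  - by move=> qw'; move: (valP w'); rewrite /= -qw' embedQ_partial.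
  - by move=> wq'; move: (valP w); rewrite /= wq' embedQ_partial.
  - by move/val_inj->.
move=> z; have [vz|nvz] := boolP (vside z); first by exists (inl (inl (exist _ z vz))).
have [fz|nfz] := boolP (full_edge z); last first.
  by exists (inr (exist _ z (introT andP (conj nvz nfz)))).
pose e : {A | is_edge (G := base_graph) A} := exist _ (vnbhd z) (full_edge_is_edge fz).
exists (inl (inr e)); have /andP [fe /eqP ne] := embedQ_edge e.
exact: full_edge_inj fe fz ne.
Qed.

Definition attached (w : {z | partial_edge z}) (q : Qvert base_graph) : bool :=
  if q is inl u then adj (val w) (val u) else false.

Lemma attached_uniq w q q' : attached w q -> attached w q' -> q = q'.
Proof.
case: q q' => [u|e] [u'|e'] //= wu wu'; congr inl.
by apply: (partial_edge_vnbhd (valP w)); rewrite inE.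
Qed.

Lemma decomp_adj x y : adj (decomp x) (decomp y) =
  clique_ext (@Qadj base_graph)
    (fun w q => (if q is inr _ then true else false) || attached w q) x y.
Proof.
have vside_partial (w : {z | partial_edge z}) : vside (val w) = false.
  by case/andP: (valP w) => /negbTE.
have embedQ_neq q (w : {z | partial_edge z}) : embedQ q != val w.
  by apply/eqP=> qw; move: (valP w); rewrite -qw embedQ_partial.
case: x y => [q|w] [q'|w']; first exact: embedQ_adj.
- case: q => [u|e]; first by rewrite /= adj_sym.
  by rewrite adj_same_side ?vside_partial ?embedQ_eside ?embedQ_neq.
- case: q' => [u|e]; first by [].
  by rewrite adj_same_side ?vside_partial ?embedQ_eside // eq_sym embedQ_neq.
- by rewrite adj_same_side ?vside_partial.
Qed.

Lemma cw_le_decomp c : cw_le c (Q base_graph) -> cw_le (c + c).+2 H.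
Proof.
case=> l C; apply: cwl_transport decomp_bij decomp_adj _.
exact: cwl_attach_clique C attached_uniq.
Qed.

End Reconstruction.

Theorem lemma4p2 (X : sgraph -> Prop) :
  hereditary X -> (forall G, X G -> in_Qstar G) ->
  (cw_bounded X <-> cw_bounded (fun G => X G /\ is_Qgraph G)).
Proof.
move=> X_hered X_Qstar; split=> [[c cwX] | [c cwXQ]].
  by exists c => G [/cwX].
exists (c + c).+2 => H XH.
have [G0 [phi [phi_inj phi_adj]]] := X_Qstar H XH.
apply: (cw_le_decomp phi_inj phi_adj); apply: cwXQ; split.
  exact: X_hered XH (Q_base_induced phi_inj phi_adj).
by exists (base_graph phi), id; split=> //; exists id.
Qed.
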